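(* There exist infinitely many (pairwise non-isomorphic) planar graphs $G$ with $\chi_1(G) = 3$.
   Context: All graphs are finite and simple. A mapping $f : V(G) \to E(G) \cup \{\emptyset\}$ is a $1$-selection of $G$ if for every $v \in V(G)$ either $f(v)$ is an edge incident with $v$ or $f(v) = \emptyset$. The graph $G_f$ is obtained from $G$ by deleting all edges in $f(V(G))$. The robust chromatic number is $\chi_1(G) = \min_f \chi(G_f)$, the minimum over all $1$-selections $f$ of $G$ of the chromatic number of $G_f$. *)

From mathcomp Require Import all_boot.
From Stdlib Require Import Reals.

Record sgraph := SGraph {
  vert :> finType;
  adj : rel vert;
  adj_sym : symmetric adj;
  adj_irr : irreflexive adj }.

Set Implicit Arguments.
Unset Strict Implicit.
Unset Printing Implicit Defensive.

Definition isomorphic (G H : sgraph) : Prop :=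
  exists phi : vert G -> vert H,
    bijective phi /\ forall u v, adj H (phi u) (phi v) = adj G u v.

Local Open Scope R_scope.

Definition arc (g : R -> R * R) : Prop :=
  continuity (fun t => fst (g t)) /\ continuity (fun t => snd (g t)) /\
  (forall s t, 0 <= s <= 1 -> 0 <= t <= 1 -> g s = g t -> s = t).

Definition plane_embedding (G : sgraph) (p : G -> R * R)
    (g : G -> G -> R -> R * R) : Prop :=
  injective p /\
  (forall u v, adj G u v ->
     arc (g u v) /\ g u v 0 = p u /\ g u v 1 = p v /\
     (forall t, g v u t = g u v (1 - t))) /\
  (forall u v w t, adj G u v -> 0 < t < 1 -> g u v t <> p w) /\
  (forall u v u' v' s t, adj G u v -> adj G u' v' ->
     ~ ((u = u' /\ v = v') \/ (u = v' /\ v = u')) ->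
     0 < s < 1 -> 0 < t < 1 -> g u v s <> g u' v' t).

Definition planar (G : sgraph) : Prop :=
  exists p g, @plane_embedding G p g.

Local Close Scope R_scope.

(* A 1-selection: f v = Some w means f(v) is the edge vw (incident with v);
   f v = None means f(v) = emptyset. *)
Definition one_selection (G : sgraph) (f : G -> option G) : Prop :=
  forall v w, f v = Some w -> adj G v w.

Definition adj_del (G : sgraph) (f : G -> option G) : rel G :=
  fun u w => adj G u w && ~~ ((f u == Some w) || (f w == Some u)).

Definition proper_coloring (V : finType) (r : rel V) (k : nat)
    (c : V -> 'I_k) : Prop :=
  forall u w, r u w -> c u <> c w.

Definition colorable (V : finType) (r : rel V) (k : nat) : Prop :=
  exists c : V -> 'I_k, proper_coloring r c.

Definition chromatic_number (V : finType) (r : rel V) (k : nat) : Prop :=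
  colorable r k /\ forall j, colorable r j -> k <= j.

Definition robust_chromatic_number (G : sgraph) (k : nat) : Prop :=
  (exists f : G -> option G, one_selection f /\ chromatic_number (adj_del f) k) /\
  (forall (f : G -> option G) j, one_selection f -> chromatic_number (adj_del f) j -> k <= j).

From mathcomp Require Import all_boot.
From Stdlib Require Import Reals ZArith Lra Lia.
From mathcomp Require Import zify.

Set Implicit Arguments.
Unset Strict Implicit.
Unset Printing Implicit Defensive.

(* Let [f] be a 1-selection of a plane triangulation [G] on [n] vertices and [c] a proper
   2-colouring of [G_f]. Every monochromatic edge of [G] is selected by one of its ends and a
   vertex selects at most one edge, so #monochromatic edges + #spare vertices <= n, a vertex
   being spare when it selects no monochromatic edge. Every face has a monochromatic edge and a
   monochromatic face has three; as each edge lies on two of the 2n - 4 faces, this gives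
   #spare vertices + #monochromatic faces <= 2.
   Our [G] is [K4] with three faces stellated, each of the nine triangles at a hub being filled
   with a copy of a 7-vertex gadget. Checking the 2^10 colourings of a gadget shows that when its
   two ends on [K4] have the same colour, it has a monochromatic face or a vertex set whose
   boundary edges are all bichromatic but which spans fewer monochromatic edges than it has
   vertices, hence a spare vertex. The three pairs of ends around a hub form a triangle, which
   cannot be properly 2-coloured, so each hub yields a spare vertex or a monochromatic face:
   3 > 2. Hence chi_1(G) >= 3; an explicit selection and 3-colouring, and an explicit
   straight-line drawing, finish the proof, and adding isolated vertices gives infinitely many
   such graphs. *)

(** * Isolated vertices and the robust chromatic number *)

Lemma isomorphic_card (G H : sgraph) : isomorphic G H -> #|G| = #|H|.
Proof. by case=> phi [/bij_eq_card]. Qed.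

Lemma colorable_widen (V : finType) (r : rel V) j k :
  j <= k -> colorable r j -> colorable r k.
Proof.
move=> jk [c cP]; exists (fun v => widen_ord jk (c v)) => u w /cP cuw E.
by apply: cuw; apply: val_inj; move/(congr1 val): E.
Qed.

Lemma robust_chromatic_numberI (G : sgraph) (k : nat) :
  (exists2 f : G -> option G, one_selection f & colorable (adj_del f) k) ->
  (forall f : G -> option G, one_selection f -> ~ colorable (adj_del f) k.-1) ->
  robust_chromatic_number G k.
Proof.
move=> [f fsel fcol] lb.
have k_min (f' : G -> option G) j : one_selection f' -> colorable (adj_del f') j -> k <= j.
  move=> f'sel cj; rewrite leqNgt; apply/negP => jk.
  have jk' : j <= k.-1 by lia.
  exact: (lb f' f'sel (colorable_widen jk' cj)).
split; first by exists f; split => //; split => // j; exact: k_min.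
by move=> f' j f'sel [cj _]; exact: k_min cj.
Qed.

Definition add_isolated_adj (G : sgraph) (m : nat) : rel (G + 'I_m) :=
  fun u v => if (u, v) is (inl a, inl b) then adj G a b else false.

Lemma add_isolated_adj_sym (G : sgraph) (m : nat) : symmetric (@add_isolated_adj G m).
Proof. by case=> [a|a] [b|b] //=; exact: adj_sym. Qed.

Lemma add_isolated_adj_irr (G : sgraph) (m : nat) : irreflexive (@add_isolated_adj G m).
Proof. by case=> [a|a] //=; exact: adj_irr. Qed.

Definition add_isolated (G : sgraph) (m : nat) : sgraph :=
  @SGraph (G + 'I_m)%type (@add_isolated_adj G m)
    (@add_isolated_adj_sym G m) (@add_isolated_adj_irr G m).

Lemma card_add_isolated (G : sgraph) (m : nat) : #|add_isolated G m| = #|G| + m.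
Proof. by rewrite card_sum card_ord. Qed.

Lemma add_isolated_selection_colorable (G : sgraph) (m k : nat) (f : G -> option G) :
  0 < k -> one_selection f -> colorable (adj_del f) k ->
  exists2 g : add_isolated G m -> option (add_isolated G m),
    one_selection g & colorable (adj_del g) k.
Proof.
move=> k_gt0 fsel [c cP].
exists (fun v => if v is inl a then omap inl (f a) else None).
  by case=> [a|a] // [b|b] //=; case E: (f a) => [x|] //= [<-]; exact: fsel.
exists (fun v => if v is inl a then c a else Ordinal k_gt0).
case=> [a|a] [b|b] //; rewrite /adj_del /= => /andP[ab sel]; apply: cP.
by move: sel; rewrite /adj_del [adj _ _ _]ab; case: (f a) => [x|]; case: (f b) => [y|].
Qed.

Lemma add_isolated_not_colorable (G : sgraph) (m k : nat) :
  (forall f : G -> option G, one_selection f -> ~ colorable (adj_del f) k) ->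
  forall g : add_isolated G m -> option (add_isolated G m),
    one_selection g -> ~ colorable (adj_del g) k.
Proof.
move=> lb g gsel [c cP].
pose f (a : G) := if g (inl a) is Some (inl b) then Some b else None.
apply: (lb f).
  by move=> a b; rewrite /f; case E: (g (inl a)) => [[x|x]|] //= [<-]; exact: gsel E.
exists (fun a => c (inl a)) => a b /andP[ab sel]; apply: cP; apply/andP; split=> //.
by move: sel; rewrite /f; case: (g (inl a)) => [[x|x]|]; case: (g (inl b)) => [[y|y]|].
Qed.

(** * Straight-line drawings *)

Local Open Scope R_scope.

Definition seg (P Q : R * R) (t : R) : R * R :=
  (fst P + t * (fst Q - fst P), snd P + t * (snd Q - snd P)).

Lemma seg_rev P Q t : seg P Q t = seg Q P (1 - t).
Proof. by rewrite /seg; f_equal; ring. Qed.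

Lemma seg_inj P Q s t : P <> Q -> seg P Q s = seg P Q t -> s = t.
Proof.
case: P => px py; case: Q => qx qy /= PQ [ex ey].
have [//|st] := Req_dec s t; exfalso; apply: PQ.
have hx : (s - t) * (qx - px) = 0 by lra.
have hy : (s - t) * (qy - py) = 0 by lra.
case: (Rmult_integral _ _ hx) => hx'; first lra.
case: (Rmult_integral _ _ hy) => hy'; first lra.
f_equal; lra.
Qed.

Lemma straight_line_planar (G : sgraph) (p : G -> R * R) :
  injective p ->
  (forall u v w t, adj G u v -> 0 < t < 1 -> seg (p u) (p v) t <> p w) ->
  (forall u v u' v' s t, adj G u v -> adj G u' v' ->
     ~ ((u = u' /\ v = v') \/ (u = v' /\ v = u')) ->
     0 < s < 1 -> 0 < t < 1 -> seg (p u) (p v) s <> seg (p u') (p v') t) ->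
  planar G.
Proof.
move=> p_inj avoid disjoint; exists p, (fun u v => seg (p u) (p v)).
split=> //; split; last by split.
move=> u v uv; have puv : p u <> p v.
  by move=> /p_inj E; move: uv; rewrite E adj_irr.
split; [|split; [|split]].
- split; [rewrite /seg /=; reg | split; [rewrite /seg /=; reg |]].
  by move=> s t _ _; exact: seg_inj.
- by rewrite /seg; case: (p u) => x y /=; f_equal; ring.
- by rewrite /seg; case: (p u) => x y; case: (p v) => x' y' /=; f_equal; ring.
- by move=> t; rewrite seg_rev.
Qed.

Local Close Scope R_scope.

Local Open Scope Z_scope.

Definition zsub (p q : Z * Z) : Z * Z := (p.1 - q.1, p.2 - q.2).
Definition zcross (p q : Z * Z) : Z := p.1 * q.2 - p.2 * q.1.
Definition zdot (p q : Z * Z) : Z := p.1 * q.1 + p.2 * q.2.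

(* Cramer's rule: the segments meet at parameters [s = ns / det] and [t = nt / det]. *)
Definition segments_apart (p0 p1 q0 q1 : Z * Z) : bool :=
  let d1 := zsub p1 p0 in let d2 := zsub q1 q0 in let w := zsub q0 p0 in
  let det := zcross d1 d2 in let ns := zcross w d2 in let nt := zcross w d1 in
  if det =? 0 then ~~ (nt =? 0)
  else if 0 <? det then ~~ [&& 0 <? ns, ns <? det, 0 <? nt & nt <? det]
  else ~~ [&& ns <? 0, det <? ns, nt <? 0 & det <? nt].

Definition off_segment (w p0 p1 : Z * Z) : bool :=
  let d := zsub p1 p0 in let u := zsub w p0 in
  (0 <? zdot d d) && (~~ (zcross u d =? 0) || ~~ ((0 <? zdot u d) && (zdot u d <? zdot d d))).

Definition zpt_eqb (p q : Z * Z) : bool := (p.1 =? q.1) && (p.2 =? q.2).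

Local Close Scope Z_scope.

Definition toR (p : Z * Z) : R * R := (IZR p.1, IZR p.2).

Local Open Scope R_scope.

Lemma IZR_zcross (p q : Z * Z) : IZR (zcross p q) = IZR p.1 * IZR q.2 - IZR p.2 * IZR q.1.
Proof. by rewrite /zcross minus_IZR !mult_IZR. Qed.

Lemma IZR_zdot (p q : Z * Z) : IZR (zdot p q) = IZR p.1 * IZR q.1 + IZR p.2 * IZR q.2.
Proof. by rewrite /zdot plus_IZR !mult_IZR. Qed.

Lemma IZR_zsub (p q : Z * Z) :
  IZR (zsub p q).1 = IZR p.1 - IZR q.1 /\ IZR (zsub p q).2 = IZR p.2 - IZR q.2.
Proof. by rewrite /zsub /= !minus_IZR. Qed.

Lemma ltb_IZR x y : IZR x < IZR y -> (x <? y)%Z.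
Proof. by move=> /lt_IZR /Z.ltb_lt. Qed.

Lemma seg_meet_cramer p0 p1 q0 q1 s t :
  seg (toR p0) (toR p1) s = seg (toR q0) (toR q1) t ->
  s * IZR (zcross (zsub p1 p0) (zsub q1 q0)) = IZR (zcross (zsub q0 p0) (zsub q1 q0)) /\
  t * IZR (zcross (zsub p1 p0) (zsub q1 q0)) = IZR (zcross (zsub q0 p0) (zsub p1 p0)).
Proof.
rewrite /toR /seg /= !IZR_zcross.
have [-> ->] := IZR_zsub p1 p0; have [-> ->] := IZR_zsub q1 q0; have [-> ->] := IZR_zsub q0 p0.
move: (IZR p0.1) (IZR p0.2) (IZR p1.1) (IZR p1.2) (IZR q0.1) (IZR q0.2) (IZR q1.1) (IZR q1.2).
move=> x0 y0 x1 y1 a0 b0 a1 b1 [ex ey].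
have e1 : a0 - x0 = s * (x1 - x0) - t * (a1 - a0) by lra.
have e2 : b0 - y0 = s * (y1 - y0) - t * (b1 - b0) by lra.
by rewrite e1 e2; split; ring.
Qed.

Lemma scaled_between (s d x : R) : 0 < s < 1 -> s * d = x ->
  (0 < d -> 0 < x < d) /\ (d < 0 -> d < x < 0).
Proof. by move=> hs <-; split=> hd; split; nra. Qed.

Lemma segments_apartP p0 p1 q0 q1 s t : segments_apart p0 p1 q0 q1 -> 0 < s < 1 -> 0 < t < 1 ->
  seg (toR p0) (toR p1) s <> seg (toR q0) (toR q1) t.
Proof.
move=> apart hs ht /seg_meet_cramer[/(scaled_between hs) [ns_pos ns_neg] Ht].
have [nt_pos nt_neg] := scaled_between ht Ht.
move: apart Ht; rewrite /segments_apart; cbv zeta.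
set det := zcross _ _; set ns := zcross _ (zsub q1 q0); set nt := zcross _ (zsub p1 p0).
case: (Z.eqb_spec det 0) => [-> | /not_0_IZR det_nz].
  by rewrite Rmult_0_r => /negP nt_nz /eq_IZR nt0; apply: nt_nz; apply/Z.eqb_eq.
case: (Z.ltb_spec 0 det) => [/IZR_lt det_pos | /IZR_le det_nonpos] /negP apart _; apply: apart.
  have [[ns0 nsd] [nt0 ntd]] := (ns_pos det_pos, nt_pos det_pos).
  by rewrite !ltb_IZR.
have det_neg : IZR det < 0 by lra.
have [[dns ns0] [dnt nt0]] := (ns_neg det_neg, nt_neg det_neg).
by rewrite !ltb_IZR.
Qed.

Lemma off_segmentP w p0 p1 s : off_segment w p0 p1 -> 0 < s < 1 -> seg (toR p0) (toR p1) s <> toR w.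
Proof.
move=> off hs [ex ey]; move: off; rewrite /off_segment; cbv zeta.
set d := zsub p1 p0; set u := zsub w p0.
have [Rd1 Rd2] := IZR_zsub p1 p0; have [Rw1 Rw2] := IZR_zsub w p0.
rewrite -/d in Rd1 Rd2; rewrite -/u in Rw1 Rw2.
have Ru1 : IZR u.1 = s * IZR d.1 by rewrite Rw1 Rd1 -ex; ring.
have Ru2 : IZR u.2 = s * IZR d.2 by rewrite Rw2 Rd2 -ey; ring.
have cross0 : IZR (zcross u d) = 0 by rewrite IZR_zcross Ru1 Ru2; ring.
have dotE : s * IZR (zdot d d) = IZR (zdot u d) by rewrite !IZR_zdot Ru1 Ru2; ring.
case/andP => /Z.ltb_lt /IZR_lt dd_pos.
have -> : (zcross u d =? 0)%Z by apply/Z.eqb_eq; exact: eq_IZR.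
have [ud_pos ud_lt] := (scaled_between hs dotE).1 dd_pos.
by rewrite !ltb_IZR.
Qed.

Local Close Scope R_scope.

(** * Monochromatic edges under a selection *)

Definition sedge (a b : nat) : nat * nat := (minn a b, maxn a b).

Definition mono (c : nat -> bool) (e : nat * nat) : bool := c e.1 == c e.2.

Definition selects (fs : nat -> option nat) (e : nat * nat) : bool :=
  (fs e.1 == Some e.2) || (fs e.2 == Some e.1).

Definition selector (fs : nat -> option nat) (e : nat * nat) : nat :=
  if fs e.1 == Some e.2 then e.1 else e.2.

Definition partner (fs : nat -> option nat) (e : nat * nat) : nat :=
  if fs e.1 == Some e.2 then e.2 else e.1.

(* [selector fs e] is a junk value unless [e] is selected; [spare] is only used when every
   monochromatic edge is. *)
Definition spare (E : seq (nat * nat)) (c : nat -> bool) (fs : nat -> option nat) (v : nat) :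
    bool :=
  ~~ has (fun e => mono c e && (selector fs e == v)) E.

Definition mono_inside (E : seq (nat * nat)) (c : nat -> bool) (S : seq nat) : nat :=
  count (fun e => [&& mono c e, e.1 \in S & e.2 \in S]) E.

Definition bichromatic_boundary (E : seq (nat * nat)) (c : nat -> bool) (S : seq nat) : bool :=
  all (fun e => ((e.1 \in S) != (e.2 \in S)) ==> ~~ mono c e) E.

Definition face_edges (f : nat * nat * nat) : seq (nat * nat) :=
  let: (a, b, d) := f in [:: sedge a b; sedge b d; sedge a d].

Definition mono_face (c : nat -> bool) (f : nat * nat * nat) : bool :=
  let: (a, b, d) := f in (c a == c b) && (c b == c d).

Lemma sedgeE a b : a <= b -> sedge a b = (a, b).
Proof. by move=> ab; rewrite /sedge; congr pair; lia. Qed.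

Lemma mono_sedge c a b : mono c (sedge a b) = (c a == c b).
Proof. by rewrite /mono /sedge /=; case: leqP => // _; rewrite eq_sym. Qed.

Lemma selects_sedge fs a b : selects fs (sedge a b) = (fs a == Some b) || (fs b == Some a).
Proof. by rewrite /selects /sedge /=; case: leqP => // _; rewrite orbC. Qed.

Lemma sedge_inj a b a' b' :
  sedge a b = sedge a' b' -> (a = a' /\ b = b') \/ (a = b' /\ b = a').
Proof. by case=> m M; lia. Qed.

Lemma count_uniq_sub (T : eqType) (p : pred T) (s1 s2 : seq T) :
  uniq s1 -> {subset s1 <= s2} -> count p s1 <= count p s2.
Proof.
move=> s1_uniq sub; rewrite -!size_filter; apply: uniq_leq_size; first exact: filter_uniq.
by move=> x; rewrite !mem_filter => /andP[-> /sub].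
Qed.

Section SelectedMonochromaticEdges.

Variables (E : seq (nat * nat)) (c : nat -> bool) (fs : nat -> option nat).
Hypothesis E_uniq : uniq E.
Hypothesis E_sorted : {in E, forall e, e.1 < e.2}.
Hypothesis mono_selected : {in E, forall e, mono c e -> selects fs e}.

Lemma selectorE e : selects fs e -> fs (selector fs e) = Some (partner fs e).
Proof. by rewrite /selects /selector /partner; case: eqP => [//|_] /= /eqP. Qed.

Lemma sedge_selector e : e.1 < e.2 -> sedge (selector fs e) (partner fs e) = e.
Proof.
by case: e => a b /= ab; rewrite /selector /partner /sedge /=; case: ifP => _; congr pair; lia.
Qed.

Lemma selector_inj : {in filter (mono c) E &, injective (selector fs)}.
Proof.
move=> e e'; rewrite !mem_filter => /andP[me eE] /andP[me' eE'] same.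
have := selectorE (mono_selected eE me); rewrite same selectorE ?mono_selected //.
case=> same_partner.
by rewrite -(sedge_selector (E_sorted eE)) -(sedge_selector (E_sorted eE')) same same_partner.
Qed.

(* Every monochromatic edge is selected by one of its ends, and each vertex selects at most one
   edge. *)
Lemma count_mono_spare n :
  {in E, forall e : nat * nat, e.2 < n} -> count (mono c) E + count (spare E c fs) (iota 0 n) <= n.
Proof.
move=> E_bound.
have sel_uniq : uniq (map (selector fs) (filter (mono c) E)).
  by rewrite map_inj_in_uniq ?filter_uniq //; exact: selector_inj.
have sel_sub :
    {subset (map (selector fs) (filter (mono c) E)) <= filter (predC (spare E c fs)) (iota 0 n)}.
  move=> v /mapP[e]; rewrite mem_filter => /andP[me eE] ->.
  rewrite mem_filter mem_iota /= /spare negbK; apply/andP; split.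
    by apply/hasP; exists e; rewrite ?me ?eqxx.
  move: (E_sorted eE) (E_bound _ eE); rewrite /selector.
  by case: e {me eE} => a b /=; case: ifP => _; lia.
have := uniq_leq_size sel_uniq sel_sub.
rewrite size_map !size_filter => le_n.
by rewrite -[n in _ <= n](size_iota 0) -(count_predC (spare E c fs)) addnC leq_add2l.
Qed.

Lemma has_spare (S : seq nat) :
  uniq S -> bichromatic_boundary E c S -> mono_inside E c S < size S -> has (spare E c fs) S.
Proof.
move=> S_uniq bdry lt_S; apply/negPn/negP => no_spare.
have S_sub : {subset S <= [seq selector fs e | e <- E & [&& mono c e, e.1 \in S & e.2 \in S]]}.
  move=> v vS; have : ~~ spare E c fs v.
    by apply: contra no_spare => spare_v; apply/hasP; exists v.
  rewrite negbK => /hasP[e eE /andP[me /eqP sel_v]].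
  apply/mapP; exists e => //; rewrite mem_filter eE me andbT /=.
  have same : (e.1 \in S) = (e.2 \in S).
    by apply/eqP; apply: contraTT me => /(implyP (allP bdry e eE)).
  by move: sel_v vS; rewrite /selector; case: ifP => _ <-; [rewrite -same | rewrite same] => ->.
by have := uniq_leq_size S_uniq S_sub; rewrite size_map size_filter leqNgt lt_S.
Qed.

Lemma mono_face_edges f : 1 + 2 * mono_face c f <= count (mono c) (face_edges f).
Proof. by case: f => [[a b] d]; rewrite /= !mono_sedge; case: (c a); case: (c b); case: (c d). Qed.

Variable F : seq (nat * nat * nat).
Hypothesis F_cover : perm_eq (flatten (map face_edges F)) (E ++ E).

(* Each face has a monochromatic edge, a monochromatic face has three, and each edge lies on
   two faces. *)
Lemma mono_faces_bound : size F + 2 * count (mono_face c) F <= 2 * count (mono c) E.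
Proof.
have -> : 2 * count (mono c) E = count (mono c) (flatten (map face_edges F)).
  by rewrite (permP F_cover) count_cat addnn mul2n.
elim: F => //= f F' IH; rewrite count_cat.
by have := mono_face_edges f; lia.
Qed.

Lemma spare_mono_face_bound n :
  {in E, forall e : nat * nat, e.2 < n} -> size F + 4 = 2 * n ->
  count (spare E c fs) (iota 0 n) + count (mono_face c) F <= 2.
Proof.
move=> E_bound F_size.
have := count_mono_spare E_bound; have := mono_faces_bound; lia.
Qed.

End SelectedMonochromaticEdges.

(** * Gadgets *)

(* A piece of a triangulation with ends [gsrc] and [gdst]; [gclosed] lists the candidate
   vertex sets for [has_spare]. *)
Record gadget := Gadget {
  gverts : seq nat;
  ginner : seq nat;
  gsrc : nat;
  gdst : nat;
  gfaces : seq (nat * nat * nat);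
  gclosed : seq (seq nat) }.

Definition local_edges (E : seq (nat * nat)) (L : seq nat) : seq (nat * nat) :=
  [seq e <- E | (e.1 \in L) && (e.2 \in L)].

Definition face_verts (f : nat * nat * nat) : seq nat := let: (a, b, d) := f in [:: a; b; d].

Definition supported (LE : seq (nat * nat)) (d : gadget) : bool :=
  let V := gverts d in
  [&& gsrc d \in V, gdst d \in V,
      all (fun f => all (fun v => v \in V) (face_verts f)) (gfaces d),
      all (all (fun v => v \in V)) (gclosed d) &
      all (fun e => (e.1 \in V) && (e.2 \in V)) LE].

Definition gadget_wf (E : seq (nat * nat)) (d : gadget) : bool :=
  [&& all (fun v => v \in gverts d) (ginner d),
      all (fun S => uniq S && all (fun v => v \in ginner d) S) (gclosed d) &
      all (fun e => (e.1 \in ginner d) || (e.2 \in ginner d) ==>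
                    (e.1 \in gverts d) && (e.2 \in gverts d)) E].

Definition gadget_cert (LE : seq (nat * nat)) (c : nat -> bool) (d : gadget) : bool :=
  [|| c (gsrc d) != c (gdst d), has (mono_face c) (gfaces d) |
      has (fun S => bichromatic_boundary LE c S && (mono_inside LE c S < size S)) (gclosed d)].

Lemma gadget_cert_local LE d (c c' : nat -> bool) : supported LE d ->
  {in gverts d, c =1 c'} -> gadget_cert LE c d = gadget_cert LE c' d.
Proof.
move=> /and5P[src_in dst_in faces_in _ /allP edges_in] cc'.
have mono_loc e : e \in LE -> mono c e = mono c' e.
  by move=> /edges_in /andP[e1 e2]; rewrite /mono !cc'.
rewrite /gadget_cert !cc' //; congr [|| _, _ | _].
  apply: eq_in_has => f /(allP faces_in); case: f => [[a b] x] /and4P[aL bL xL _] /=.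
  by rewrite !cc'.
apply: eq_in_has => S _; congr (_ && (_ < _)).
  by apply: eq_in_all => e /mono_loc ->.
by apply: eq_in_count => e /mono_loc ->.
Qed.

Definition relabel_edge (lab : nat -> nat) (e : nat * nat) : nat * nat :=
  sedge (lab e.1) (lab e.2).

Definition relabel_face (lab : nat -> nat) (f : nat * nat * nat) : nat * nat * nat :=
  let: (a, b, x) := f in (lab a, lab b, lab x).

Definition relabel (lab : nat -> nat) (d : gadget) : gadget :=
  Gadget (map lab (gverts d)) (map lab (ginner d)) (lab (gsrc d)) (lab (gdst d))
         (map (relabel_face lab) (gfaces d)) (map (map lab) (gclosed d)).

Lemma boundary_sedge c (S : seq nat) x y :
  (((sedge x y).1 \in S) != ((sedge x y).2 \in S)) ==> ~~ mono c (sedge x y) =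
  ((x \in S) != (y \in S)) ==> ~~ (c x == c y).
Proof. by rewrite mono_sedge /sedge /=; case: leqP => // _; rewrite eq_sym. Qed.

Lemma inside_sedge c (S : seq nat) x y :
  [&& mono c (sedge x y), (sedge x y).1 \in S & (sedge x y).2 \in S] =
  [&& c x == c y, x \in S & y \in S].
Proof. by rewrite mono_sedge /sedge /=; case: leqP => // _; rewrite [(y \in S) && _]andbC. Qed.

Section Relabel.

Variables (lab : nat -> nat) (t : gadget) (LEt LE : seq (nat * nat)).
Hypothesis lab_inj : {in gverts t &, injective lab}.
Hypothesis t_supported : supported LEt t.
Hypothesis LE_relabel : perm_eq LE (map (relabel_edge lab) LEt).

Lemma mem_relabel (S : seq nat) v : {subset S <= gverts t} -> v \in gverts t ->
  (lab v \in map lab S) = (v \in S).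
Proof.
move=> S_sub vV; apply/mapP/idP => [[w wS lab_vw] | vS]; last by exists v.
by rewrite (lab_inj vV (S_sub _ wS) lab_vw).
Qed.

Lemma gadget_cert_relabel c : gadget_cert LE c (relabel lab t) = gadget_cert LEt (c \o lab) t.
Proof.
move: t_supported => /and5P[_ _ _ /allP closed_in /allP edges_in].
rewrite /gadget_cert /=; congr [|| _, _ | _].
  by rewrite has_map; apply: eq_has; case=> [[a b] x].
rewrite has_map; apply: eq_in_has => S /closed_in /allP S_sub /=.
rewrite size_map /bichromatic_boundary /mono_inside (perm_all _ LE_relabel) (permP LE_relabel).
rewrite all_map count_map; congr (_ && (_ < _)).
  apply: eq_in_all => -[a b] /edges_in /andP[aV bV].
  by rewrite /= boundary_sedge !mem_relabel.
apply: eq_in_count => -[a b] /edges_in /andP[aV bV].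
by rewrite /= inside_sedge !mem_relabel.
Qed.

End Relabel.

Section GadgetWitness.

Variables (E : seq (nat * nat)) (d : gadget).
Hypothesis d_wf : gadget_wf E d.

Lemma bichromatic_boundary_local c S : {subset S <= ginner d} ->
  bichromatic_boundary (local_edges E (gverts d)) c S -> bichromatic_boundary E c S.
Proof.
move: d_wf => /and3P[_ _ edges_in] S_inner bdry.
apply/allP => e eE; apply/implyP => cross; apply: (implyP (allP bdry e _) cross).
rewrite mem_filter eE andbT; apply: (implyP (allP edges_in e eE)).
move: cross; case e1: (e.1 \in S); case e2: (e.2 \in S) => //= _.
  by rewrite (S_inner _ e1).
by rewrite (S_inner _ e2) orbT.
Qed.

Lemma mono_inside_local c S : {subset S <= gverts d} ->
  mono_inside (local_edges E (gverts d)) c S = mono_inside E c S.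
Proof.
move=> S_verts; rewrite /mono_inside count_filter; apply: eq_count => e /=.
case e1: (e.1 \in S); case e2: (e.2 \in S); rewrite ?andbF //= !andbT.
by rewrite (S_verts _ e1) (S_verts _ e2) !andbT.
Qed.

Lemma gadget_witness c fs : gadget_cert (local_edges E (gverts d)) c d ->
  [|| c (gsrc d) != c (gdst d), has (spare E c fs) (ginner d) | has (mono_face c) (gfaces d)].
Proof.
have /and3P[inner_in closed_in _] := d_wf.
case/or3P => [-> // | -> | /hasP[S S_closed /andP[bdry lt_S]]]; rewrite ?orbT //.
have /andP[S_uniq /allP S_inner] := allP closed_in S S_closed.
have S_verts : {subset S <= gverts d} by move=> v /S_inner /(allP inner_in).
have bdry' := bichromatic_boundary_local S_inner bdry.
rewrite (mono_inside_local _ S_verts) in lt_S.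
have /hasP[v vS spare_v] := has_spare fs S_uniq bdry' lt_S.
suff -> : has (spare E c fs) (ginner d) by rewrite orbT.
by apply/hasP; exists v => //; exact: S_inner.
Qed.

End GadgetWitness.

Definition witnessed (E : seq (nat * nat)) (c : nat -> bool) (fs : nat -> option nat)
    (d : gadget) : bool :=
  has (spare E c fs) (ginner d) || has (mono_face c) (gfaces d).

Lemma count_witnessed_le E c fs (ds : seq gadget) :
  count (witnessed E c fs) ds <=
  count (spare E c fs) (flatten (map ginner ds)) + count (mono_face c) (flatten (map gfaces ds)).
Proof.
elim: ds => //= d ds IH; rewrite !count_cat.
have wd : witnessed E c fs d <= count (spare E c fs) (ginner d) + count (mono_face c) (gfaces d).
  rewrite /witnessed !has_count.
  by case: (count (spare E c fs) _) => [|m]; case: (count (mono_face c) _).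
lia.
Qed.

(* Vertices 0..6 are inner, 7 and 8 are the ends and 9 is the hub. *)
Definition template : gadget :=
  Gadget (iota 0 10) (iota 0 7) 7 8
    [:: (0, 1, 3); (7, 0, 1); (0, 3, 4); (0, 4, 6); (7, 0, 6); (1, 2, 3);
        (7, 1, 2); (2, 3, 5); (9, 2, 5); (7, 9, 2); (3, 4, 5); (8, 4, 5);
        (8, 4, 6); (8, 9, 5); (7, 8, 6)]
    [:: [:: 1]; [:: 6]; [:: 0; 1; 6]; [:: 1; 3; 4; 6]; [:: 4; 6];
        [:: 0; 6]; [:: 0; 1; 2; 5; 6]; [:: 1; 2; 4; 5; 6]].

Definition template_edges : seq (nat * nat) :=
  undup (flatten (map face_edges (gfaces template))).

Fixpoint bitstrings (n : nat) : seq (seq bool) :=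
  if n is n'.+1 then map (cons true) (bitstrings n') ++ map (cons false) (bitstrings n')
  else [:: [::]].

Lemma mem_bitstrings bs : bs \in bitstrings (size bs).
Proof.
elim: bs => [|b bs IH] //=; rewrite mem_cat.
by case: b; apply/orP; [left | right]; exact: map_f.
Qed.

Lemma template_supported : supported template_edges template.
Proof. by vm_compute. Qed.

Lemma template_exhaustive :
  all (fun bs => gadget_cert template_edges (nth false bs) template) (bitstrings 10).
Proof. by vm_compute. Qed.

Lemma template_cert c : gadget_cert template_edges c template.
Proof.
have := mem_bitstrings (map c (iota 0 10)); rewrite size_map size_iota.
move=> /(allP template_exhaustive).
suff agree : {in gverts template, nth false (map c (iota 0 10)) =1 c}.
  by rewrite (gadget_cert_local template_supported agree).
by move=> v; rewrite mem_iota => /andP[_ v_lt]; rewrite (nth_map 0) ?size_iota // nth_iota.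
Qed.

Definition gadget_on (L : seq nat) : gadget := relabel (nth 0 L) template.

Definition gadget_ok (E : seq (nat * nat)) (L : seq nat) : bool :=
  [&& uniq L, size L == 10, gadget_wf E (gadget_on L) &
      perm_eq (local_edges E (gverts (gadget_on L)))
              (map (relabel_edge (nth 0 L)) template_edges)].

Lemma gadget_on_cert E L c : gadget_ok E L ->
  gadget_cert (local_edges E (gverts (gadget_on L))) c (gadget_on L).
Proof.
case/and4P => L_uniq /eqP L_size _ L_edges.
rewrite (gadget_cert_relabel _ template_supported L_edges); first exact: template_cert.
move=> i j; rewrite !mem_iota => /andP[_ i_lt] /andP[_ j_lt] /eqP.
by rewrite nth_uniq ?L_size // => /eqP.
Qed.

(* The triangle [x y z] split at the hub [h], each of the three new triangles filled by a gadget. *)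
Definition stellation (h x y z : nat) : seq (seq nat) :=
  [:: iota h.+1 7 ++ [:: x; y; h];
      iota (h + 8) 7 ++ [:: y; z; h];
      iota (h + 15) 7 ++ [:: z; x; h]].

Lemma bool_triangle (x y z P Q R : bool) :
  (x != y) || P -> (y != z) || Q -> (z != x) || R -> [|| P, Q | R].
Proof. by case: x; case: y; case: z; case: P; case: Q; case: R. Qed.

Lemma stellation_witnessed E c fs h x y z : all (gadget_ok E) (stellation h x y z) ->
  has (witnessed E c fs) (map gadget_on (stellation h x y z)).
Proof.
rewrite /= andbT => /and3P[ok1 ok2 ok3].
have witness L : gadget_ok E L -> [|| c (nth 0 L 7) != c (nth 0 L 8),
    has (spare E c fs) (ginner (gadget_on L)) | has (mono_face c) (gfaces (gadget_on L))].
  move=> ok; case/and4P: (ok) => _ _ wf _.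
  exact: (gadget_witness wf fs (gadget_on_cert c ok)).
rewrite orbF; exact: bool_triangle (witness _ ok1) (witness _ ok2) (witness _ ok3).
Qed.

(** * The triangulation *)

(* [K4] on [0..3] with three of its faces stellated: a triangulation with 70 vertices. *)
Definition labellings : seq (seq nat) :=
  stellation 4 0 1 2 ++ stellation 26 0 1 3 ++ stellation 48 0 2 3.

Definition gadgets : seq gadget := map gadget_on labellings.

Definition faces : seq (nat * nat * nat) := (1, 2, 3) :: flatten (map gfaces gadgets).

Definition edges : seq (nat * nat) := undup (flatten (map face_edges faces)).

Lemma edges_wf : all (fun e => (e.1 < e.2) && (e.2 < 70)) edges.
Proof. by vm_compute. Qed.

Lemma faces_cover : perm_eq (flatten (map face_edges faces)) (edges ++ edges).
Proof. by vm_compute. Qed.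

Lemma size_faces : size faces = 136.
Proof. by vm_compute. Qed.

Lemma labellings_ok : all (gadget_ok edges) labellings.
Proof. by vm_compute. Qed.

Lemma inner_wf :
  uniq (flatten (map ginner gadgets)) && all (fun v => v < 70) (flatten (map ginner gadgets)).
Proof. by vm_compute. Qed.

Theorem no_selected_two_coloring c fs : ~ {in edges, forall e, mono c e -> selects fs e}.
Proof.
move=> mono_selected.
have E_sorted : {in edges, forall e : nat * nat, e.1 < e.2} by move=> e /(allP edges_wf) /andP[].
have E_bound : {in edges, forall e : nat * nat, e.2 < 70} by move=> e /(allP edges_wf) /andP[].
have E_uniq : uniq edges := undup_uniq _.
have := spare_mono_face_bound E_uniq E_sorted mono_selected faces_cover E_bound.
rewrite size_faces => /(_ erefl) at_most_2.
have at_least_3 : 3 <= count (witnessed edges c fs) gadgets.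
  move: labellings_ok; rewrite /gadgets /labellings !map_cat !all_cat !count_cat.
  case/and3P=> ok1 ok2 ok3.
  have := stellation_witnessed c fs ok1; have := stellation_witnessed c fs ok2.
  by have := stellation_witnessed c fs ok3; rewrite !has_count; lia.
have /andP[inner_uniq /allP inner_bound] := inner_wf.
have spare_le : count (spare edges c fs) (flatten (map ginner gadgets))
                <= count (spare edges c fs) (iota 0 70).
  by apply: count_uniq_sub inner_uniq _ => v /inner_bound; rewrite mem_iota.
have face_le : count (mono_face c) (flatten (map gfaces gadgets)) <= count (mono_face c) faces.
  exact: leq_addl.
have := count_witnessed_le edges c fs gadgets; lia.
Qed.

Definition base_adj : rel 'I_70 := fun a b => sedge a b \in edges.

Lemma base_adj_sym : symmetric base_adj.
Proof. by move=> a b; rewrite /base_adj /sedge minnC maxnC. Qed.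

Lemma base_adj_irr : irreflexive base_adj.
Proof.
move=> a; rewrite /base_adj /sedge minnn maxnn.
by apply/negP => /(allP edges_wf) /andP[]; rewrite ltnn.
Qed.

Definition base : sgraph := @SGraph 'I_70 base_adj base_adj_sym base_adj_irr.

Lemma sedge_lt70 a b : sedge a b \in edges -> (a < 70) && (b < 70).
Proof. by move=> /(allP edges_wf) /andP[]; rewrite /sedge /=; lia. Qed.

Lemma ord2_eq (i j : 'I_2) : (val i == 0) = (val j == 0) -> i = j.
Proof. by case: i j => [[|[|i]] ?] [[|[|j]] ?] //= _; apply: val_inj. Qed.

Lemma base_not_two_colorable (f : base -> option base) :
  one_selection f -> ~ colorable (adj_del f) 2.
Proof.
move=> _ [col colP].
pose c (n : nat) := val (col (inord n)) == 0.
pose fs (n : nat) := omap val (f (inord n)).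
apply: (no_selected_two_coloring (c := c) (fs := fs)) => e eE mono_e.
have /andP[e12 e2] := allP edges_wf e eE.
have e1 : e.1 < 70 by exact: ltn_trans e12 e2.
have uw : base_adj (inord e.1) (inord e.2).
  by rewrite /base_adj !inordK // sedgeE ?(ltnW e12).
have : ~~ adj_del f (inord e.1) (inord e.2).
  by apply/negP => /colP; apply; exact: ord2_eq (eqP mono_e).
rewrite /adj_del [adj _ _ _]uw /= negbK /selects /fs.
by case/orP => /eqP ->; rewrite /= inordK ?eqxx ?orbT.
Qed.

Definition selection_data : seq (option nat) :=
  [:: Some 69; Some 0; Some 62; Some 48; Some 17; None; Some 0; Some 4; Some 10; Some 1;
      None; None; Some 13; Some 15; Some 1; Some 12; Some 2; Some 15; Some 1; Some 23;
      Some 22; None; Some 24; Some 0; Some 4; Some 2; Some 29; None; Some 29; Some 32;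
      None; Some 32; Some 26; Some 31; Some 35; Some 36; None; Some 39; Some 40; None;
      None; None; Some 43; Some 46; Some 45; Some 47; Some 0; Some 3; Some 58; Some 52;
      None; Some 0; None; None; Some 51; Some 0; Some 59; Some 2; Some 59; None;
      Some 61; None; None; Some 69; Some 63; Some 66; Some 67; None; Some 0; None].

Definition coloring_data : seq nat :=
  [:: 1; 1; 2; 0; 0; 0; 1; 0; 2; 1; 2; 2; 0; 0; 1; 0; 2; 0; 1; 1;
      0; 1; 0; 1; 0; 2; 2; 0; 2; 2; 1; 2; 2; 2; 0; 0; 0; 1; 2; 1;
      2; 2; 1; 1; 0; 0; 1; 0; 0; 2; 0; 1; 2; 0; 1; 1; 0; 2; 0; 0;
      1; 1; 2; 1; 1; 2; 2; 2; 1; 1].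

Lemma selection_data_ok :
  all (fun a => if nth None selection_data a is Some b then sedge a b \in edges else true)
      (iota 0 70).
Proof. by vm_compute. Qed.

Lemma coloring_data_ok :
  all (fun e => (nth 0 coloring_data e.1 != nth 0 coloring_data e.2) ||
                selects (nth None selection_data) e)
      edges && all (fun a => nth 0 coloring_data a < 3) (iota 0 70).
Proof. by vm_compute. Qed.

Lemma base_three_colorable_after_selection :
  exists2 f : base -> option base, one_selection f & colorable (adj_del f) 3.
Proof.
pose f (a : base) : option base := omap inord (nth None selection_data a).
have sel_ok (a : 'I_70) b : nth None selection_data a = Some b -> sedge a b \in edges.
  by move=> E; have := allP selection_data_ok a; rewrite mem_iota ltn_ord E => /(_ isT).
have fE (a b : 'I_70) : (f a == Some b) = (nth None selection_data a == Some (val b)).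
  rewrite /f; case E: (nth None selection_data a) => [b'|] //=.
  have /andP[_ b'_lt] := sedge_lt70 (sel_ok _ _ E).
  by apply/eqP/eqP => [[<-] | [->]]; rewrite ?inordK ?inord_val.
exists f.
  move=> a b; rewrite /f; case E: (nth None selection_data a) => [b'|] //= [<-].
  have /andP[_ b'_lt] := sedge_lt70 (sel_ok _ _ E).
  by rewrite /= /base_adj inordK //; exact: sel_ok E.
have /andP[/allP proper /allP lt3] := coloring_data_ok.
exists (fun a : base => inord (nth 0 coloring_data a)) => a b /andP[ab kept] /(congr1 val).
have a3 := lt3 a; have b3 := lt3 b; rewrite !mem_iota !ltn_ord in a3 b3.
rewrite /= !inordK ?a3 ?b3 ?isT // => same.
move: (proper _ ab) kept; rewrite selects_sedge !fE.
by rewrite /sedge /=; case: leqP => _ /=; rewrite same eqxx /= => ->.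
Qed.

(** * A drawing of the triangulation *)

Local Open Scope Z_scope.

Definition coords : seq (Z * Z) :=
  [:: (45668, 33332); (0, 0); (100000, 7000); (37000, 93000); (48558, 13443);
      (32969, 21268); (37354, 23358); (38500, 20371); (32270, 18459); (23904, 14031);
      (28644, 13262); (25631, 17155); (34787, 3711); (27958, 3744); (34983, 5980);
      (42057, 5270); (56190, 5493); (56354, 7441); (47743, 4052); (77910, 15353);
      (80361, 13239); (72183, 13982); (71341, 16607); (65570, 20808); (60664, 19636);
      (72288, 19123); (27554, 42108); (30299, 24907); (33619, 28451); (31116, 30443);
      (27406, 25101); (20638, 18484); (21341, 23230); (24152, 19184); (14089, 31965);
      (12050, 25458); (16315, 31465); (17782, 38405); (22281, 51781); (24185, 51352);
      (18340, 44186); (38278, 69459); (36999, 72427); (35231, 64423); (37481, 62826);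
      (39746, 56063); (37135, 51750); (40176, 62963); (60889, 44446); (63149, 27208);
      (58875, 30216); (60755, 32517); (65926, 27799); (74458, 22255); (72405, 26806);
      (70819, 22446); (77000, 36374); (80873, 30276); (74964, 35572); (71532, 42165);
      (63276, 54649); (61534, 53965); (69320, 47754); (42514, 69755); (42917, 72843);
      (46949, 65242); (45210, 63364); (44931, 56427); (48732, 52563); (42525, 63130)].

Definition pt (a : nat) : Z * Z := nth (0, 0)%Z coords a.

Local Close Scope Z_scope.

Lemma edges_apart : all (fun e => all (fun e' =>
  (e == e') || segments_apart (pt e.1) (pt e.2) (pt e'.1) (pt e'.2)) edges) edges.
Proof. by vm_compute. Qed.

Lemma vertices_off_edges :
  all (fun w => all (fun e => off_segment (pt w) (pt e.1) (pt e.2)) edges) (iota 0 70).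
Proof. by vm_compute. Qed.

Lemma pt_distinct :
  all (fun a => all (fun b => (a == b) || ~~ zpt_eqb (pt a) (pt b)) (iota 0 70)) (iota 0 70).
Proof. by vm_compute. Qed.

Lemma pt_below : all (fun a => ((pt a).2 <=? 100000)%Z) (iota 0 (size coords)).
Proof. by vm_compute. Qed.

Lemma pt_inj (a b : 'I_70) : toR (pt a) = toR (pt b) -> a = b.
Proof.
case=> /eq_IZR E1 /eq_IZR E2; apply: val_inj.
have := allP (allP pt_distinct a _) b; rewrite !mem_iota !ltn_ord => /(_ isT isT).
by case/orP => [/eqP // | ]; rewrite /zpt_eqb E1 E2 !Z.eqb_refl.
Qed.

Local Open Scope R_scope.

Lemma pt_le a : snd (toR (pt a)) <= 100000.
Proof.
apply: IZR_le; apply/Z.leb_le; rewrite /pt.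
case: (ltnP a (size coords)) => [a_lt | /(nth_default (0, 0)%Z) -> //].
by apply: (allP pt_below); rewrite mem_iota.
Qed.

Lemma seg_sedge (q : nat -> R * R) a b t : 0 < t < 1 ->
  exists2 t', 0 < t' < 1 & seg (q a) (q b) t = seg (q (sedge a b).1) (q (sedge a b).2) t'.
Proof.
move=> ht; rewrite /sedge /=; case: leqP => _; first by exists t.
by exists (1 - t); [lra | rewrite seg_rev].
Qed.

Lemma seg_snd_le P Q M t : snd P <= M -> snd Q <= M -> 0 < t < 1 -> snd (seg P Q t) <= M.
Proof. by rewrite /seg /=; nra. Qed.

(* Isolated vertices are placed on a horizontal line above the drawing of [base]. *)
Definition pos (m : nat) (v : add_isolated base m) : R * R :=
  match v with inl a => toR (pt a) | inr k => (INR k + 300000, 300000) end.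

Lemma pos_inj m : injective (@pos m).
Proof.
case=> [a|k] [b|k'] /=.
- by move=> /pt_inj ->.
- by case=> _ E; have := pt_le a; rewrite /= E; lra.
- by case=> _ E; have := pt_le b; rewrite /= -E; lra.
- by case=> /Rplus_eq_reg_r /INR_eq E; congr inr; exact: val_inj.
Qed.

Lemma planar_add_isolated_base m : planar (add_isolated base m).
Proof.
apply: (@straight_line_planar _ (@pos m)); first exact: pos_inj.
- move=> [a|?] [b|?] w t //= ab ht.
  have [t' ht' ->] := seg_sedge (fun n => toR (pt n)) a b ht.
  case: w => [c|k] /=.
    apply: off_segmentP ht'; apply: (allP (allP vertices_off_edges c _)) ab.
    by rewrite mem_iota ltn_ord.
  by move=> E; have := seg_snd_le (pt_le (minn a b)) (pt_le (maxn a b)) ht'; rewrite E /=; lra.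
move=> [a|?] [b|?] [a'|?] [b'|?] s t //= ab a'b' not_same hs ht.
have [s' hs' ->] := seg_sedge (fun n => toR (pt n)) a b hs.
have [t' ht' ->] := seg_sedge (fun n => toR (pt n)) a' b' ht.
apply: segments_apartP hs' ht'.
have := allP (allP edges_apart _ ab) _ a'b'; case: eqP => [/sedge_inj same _ | //].
by case: not_same; case: same => -[/val_inj -> /val_inj ->]; [left | right].
Qed.

Local Close Scope R_scope.

Lemma robust_add_isolated_base m : robust_chromatic_number (add_isolated base m) 3.
Proof.
apply: robust_chromatic_numberI; last exact: add_isolated_not_colorable base_not_two_colorable.
have [f fsel fcol] := base_three_colorable_after_selection.
exact: add_isolated_selection_colorable fsel fcol.
Qed.

Theorem theorem1p3 :
  exists Gs : nat -> sgraph,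
    (forall i, planar (Gs i) /\ robust_chromatic_number (Gs i) 3) /\
    (forall i j, i <> j -> ~ isomorphic (Gs i) (Gs j)).
Proof.
exists (add_isolated base); split=> [i | i j ij /isomorphic_card].
  by split; [exact: planar_add_isolated_base | exact: robust_add_isolated_base].
by rewrite !card_add_isolated card_ord; lia.
Qed.
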